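(* Let $n$ be even, $k\le n/2$, let ${\mathbf{H}}$ be chosen uniformly at random in $\mathbb{F}_3^{(n/2-k)\times n/2}$, and let $d\in\{1,\dots,k\}$. Set $R=k/(n/2)$, $\delta=d/(n/2)$, and $$\gamma=\min_{x>0}\Big((1-R+\delta)\log_3\frac{1+3x}{x}+(R-\delta)\log_3(1+x)\Big)-1+R.$$ Call a subset ${\mathcal E}\subseteq\{1,\dots,n/2\}$ of size $k-d$ good for ${\mathbf{H}}$ if the submatrix of ${\mathbf{H}}$ formed by the columns indexed by the complement of ${\mathcal E}$ has full rank $n/2-k$. Let ${\mathcal J}^{\mathrm{unif}}$ be uniformly distributed over the subsets of $\{1,\dots,n/2\}$ of size $k-d$ and ${\mathcal J}_{{\mathbf{H}}}$ uniformly distributed over those subsets of size $k-d$ that are good for ${\mathbf{H}}$. Then $$\mathbb{P}_{{\mathbf{H}}}\Big(\rho({\mathcal J}^{\mathrm{unif}},{\mathcal J}_{{\mathbf{H}}})>\frac{1}{3^d}\Big)\le\frac{2}{\binom{n/2}{k-d}}\big(3^d+2\cdot3^{2d+\gamma n/2}\big).$$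
   Context: $\rho$ denotes the statistical distance between two distributions on the same finite set: $\rho({\mathcal D}_0,{\mathcal D}_1)=\frac12\sum_x|{\mathcal D}_0(x)-{\mathcal D}_1(x)|$. *)

From HB Require Import structures.
From mathcomp Require Import all_boot all_order all_algebra.
From mathcomp Require Import all_classical all_reals all_analysis.
Set Implicit Arguments. Unset Strict Implicit. Unset Printing Implicit Defensive.
Import Order.TTheory GRing.Theory Num.Theory.
Local Open Scope ring_scope.

(* Parity-check-like matrices: r rows (r = n/2 - k), m columns (m = n/2), over F_3. *)

Definition compl_cols (r m : nat) (H : 'M['F_3]_(r, m)) (E : {set 'I_m}) :
    'M['F_3]_(r, #|~: E|) :=
  colsub (enum_val : 'I_#|~: E| -> 'I_m) H.

Definition good (r m : nat) (H : 'M['F_3]_(r, m)) (E : {set 'I_m}) : bool :=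
  \rank (compl_cols H E) == r.

Definition unif_dist (R : realType) (m s : nat) (E : {set 'I_m}) : R :=
  if #|E| == s then ('C(m, s))%:R^-1 else 0.

(* Uniform distribution on the subsets of size s that are good for H.
   (If there is no good subset, this is the zero function.) *)
Definition good_dist (R : realType) (r m s : nat) (H : 'M['F_3]_(r, m))
    (E : {set 'I_m}) : R :=
  if (#|E| == s) && good H E
  then (#|[set E' : {set 'I_m} | (#|E'| == s) && good H E']|)%:R^-1 else 0.

Definition sdist (R : realType) (m : nat) (D0 D1 : {set 'I_m} -> R) : R :=
  2^-1 * \sum_(E : {set 'I_m}) `|D0 E - D1 E|.

Definition probH (R : realType) (r m : nat) (P : pred 'M['F_3]_(r, m)) : R :=
  (#|[set H : 'M['F_3]_(r, m) | P H]|)%:R / (#|{: 'M['F_3]_(r, m)}|)%:R.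

Definition log3 (R : realType) (x : R) : R := ln x / ln 3.

Definition gamma_exp (R : realType) (Rt del : R) : R :=
  inf [set y : R | exists2 x : R, 0 < x &
        y = (1 - Rt + del) * log3 ((1 + 3 * x) / x) + (Rt - del) * log3 (1 + x)]
  - 1 + Rt.

From HB Require Import structures.
From mathcomp Require Import all_boot all_order all_algebra.
From mathcomp Require Import all_classical all_reals all_analysis.
From mathcomp Require Import ring lra zify.
Set Implicit Arguments. Unset Strict Implicit. Unset Printing Implicit Defensive.
Import Order.TTheory GRing.Theory Num.Theory.
Local Open Scope ring_scope.

(* Write m = n/2 and s = k - d.  A set E is bad for H exactly when some
   y != 0 annihilates the columns of H outside E, and then so does -y.  So the
   number Z(H) of such pairs (E, y) is at least twice the number of bad sets,
   while the statistical distance is at most the fraction of bad sets.  Z has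
   mean at most C(m, s) 3^-d, hence the event forces Z to exceed its mean by
   C(m, s) 3^-d, and Chebyshev's inequality applies.  In the second moment,
   pairs with linearly independent y, y' are uncorrelated; a dependent pair
   contributes 3^-|E^c :|: E'^c|, and the sum over E' is bounded by the
   generating function (1 + 3x)^(m-s) (1 + x)^s / x^(m-s) for every x > 0,
   which yields gamma. *)

Lemma sum_natr_pred (R : pzSemiRingType) (T : finType) (P : pred T) :
  \sum_(t : T) (P t)%:R = #|[set t | P t]|%:R :> R.
Proof.
rewrite -sum1_card natr_sum [RHS]big_mkcond /=.
by apply: eq_bigr => t _; rewrite inE; case: (P t).
Qed.

Lemma sum_subset_prod (R : comPzSemiRingType) (I : finType) (w : I -> R) :
  \sum_(B : {set I}) \prod_(j in B) w j = \prod_j (1 + w j).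
Proof.
transitivity (\prod_j \sum_(b : bool) (if b then w j else 1)); last first.
  by apply: eq_bigr => j _; rewrite big_bool addrC.
rewrite bigA_distr_bigA /= (reindex (fun B : {set I} => [ffun j => j \in B])) /=.
  apply: eq_bigr => B _; rewrite big_mkcond /=.
  by apply: eq_bigr => j _; rewrite ffunE.
exists (fun f : {ffun I -> bool} => [set j | f j]) => [B _ | f _].
  by apply/setP => j; rewrite inE ffunE.
by apply/ffunP => j; rewrite !ffunE inE.
Qed.

Lemma sum_pow_card_setI (R : comPzSemiRingType) (I : finType) (A : {set I}) (c x : R) :
  \sum_(B : {set I}) c ^+ #|A :&: B| * x ^+ #|B|
    = (1 + c * x) ^+ #|A| * (1 + x) ^+ #|~: A|.
Proof.
have termE B :
    c ^+ #|A :&: B| * x ^+ #|B| = \prod_(j in B) (if j \in A then c * x else x).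
  rewrite (eq_bigr (fun j => (if j \in A then c else 1) * x)); last first.
    by move=> j _; case: (j \in A); rewrite ?mul1r.
  rewrite big_split /= prodr_const -big_mkcondr /=.
  by rewrite (eq_bigl (mem (A :&: B))) ?prodr_const // => j; rewrite !inE andbC.
under eq_bigr do rewrite termE.
rewrite sum_subset_prod (bigID (fun j => j \in A)) /=.
rewrite (eq_bigr (fun=> 1 + c * x)) => [|j jA]; last by rewrite jA.
rewrite [X in _ * X](eq_bigr (fun=> 1 + x)) => [|j jA]; last by rewrite (negPf jA).
by rewrite !prodr_const; congr (_ * _ ^+ _); apply: eq_card => j; rewrite !inE.
Qed.

Lemma card_le_sum_sqr (R : realDomainType) (T : finType) (P : pred T) (f : T -> R) c :
  0 <= c -> (forall t, P t -> c <= f t) ->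
  #|[set t | P t]|%:R * c ^+ 2 <= \sum_t f t ^+ 2.
Proof.
move=> c0 Pc; rewrite -sum_natr_pred mulr_suml; apply: ler_sum => t _.
case: (boolP (P t)) => [Pt|_]; last by rewrite mul0r sqr_ge0.
by rewrite mul1r lerXn2r ?nnegrE ?(le_trans c0 (Pc t Pt)) ?Pc.
Qed.

Lemma sum_sqr_sum (R : comPzRingType) (T I : finType) (S : {set I}) (W : I -> T -> R) :
  \sum_t (\sum_(i in S) W i t) ^+ 2 = \sum_(i in S) \sum_(j in S) \sum_t W i t * W j t.
Proof.
under eq_bigr do rewrite expr2 mulr_suml; rewrite exchange_big /=.
apply: eq_bigr => i _; under eq_bigr do rewrite mulr_sumr; exact: exchange_big.
Qed.

Lemma sum_centered_mul (R : comPzRingType) (T : finType) (f g : T -> R) (p : R) :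
  \sum_t f t = #|T|%:R * p -> \sum_t g t = #|T|%:R * p ->
  \sum_t (f t - p) * (g t - p) = \sum_t f t * g t - #|T|%:R * p ^+ 2.
Proof.
move=> sf sg.
under eq_bigr do rewrite mulrBl !mulrBr.
rewrite !sumrB -!mulr_sumr -mulr_suml sf sg sumr_const -mulr_natl; ring.
Qed.

Lemma sum_mx_prod_col (R : comPzSemiRingType) (F : finType) r m
    (g : 'I_m -> 'cV[F]_r -> R) :
  \sum_(H : 'M[F]_(r, m)) \prod_j g j (col j H) = \prod_j \sum_v g j v.
Proof.
rewrite bigA_distr_bigA /= (reindex (fun H : 'M[F]_(r, m) => [ffun j => col j H])) /=.
  by apply: eq_bigr => H _; apply: eq_bigr => j _; rewrite ffunE.
exists (fun f : {ffun 'I_m -> 'cV[F]_r} => \matrix_(i, j) f j i 0) => [H _ | f _].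
  by apply/matrixP => i j; rewrite !mxE ffunE mxE.
by apply/ffunP => j; apply/matrixP => i k; rewrite ffunE !mxE (ord1 k).
Qed.

Lemma sum_setX (R : nmodType) (I J : finType) (A : {set I}) (B : {set J})
    (F : I * J -> R) :
  \sum_(i in finset.setX A B) F i = \sum_(a in A) \sum_(b in B) F (a, b).
Proof.
by rewrite pair_big_dep; apply: eq_big => [[a b]|[a b]] //=; rewrite finset.in_setX.
Qed.

Lemma prodr_if_const (R : comPzSemiRingType) (I : finType) (A : {set I}) (c : R) :
  \prod_j (if j \in A then c else 1) = c ^+ #|A|.
Proof. by rewrite -big_mkcond prodr_const. Qed.

Section UniformOn.
Variables (R : realFieldType) (T : finType).

Definition unif_on (S : {set T}) (x : T) : R := if x \in S then #|S|%:R^-1 else 0.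

Lemma sdist_unif_on_sub (S G : {set T}) : G \subset S ->
  2^-1 * \sum_x `|unif_on S x - unif_on G x| <= #|S :\: G|%:R / #|S|%:R.
Proof.
move=> GS; set a : R := #|G|%:R; set b : R := #|S :\: G|%:R; set n : R := #|S|%:R.
have nE : n = a + b.
  by rewrite /n /a /b -natrD cardsD (finset.setIidPr GS) subnKC ?subset_leq_card.
have pointwise x : `|unif_on S x - unif_on G x| <=
    (if x \in G then a^-1 - n^-1 else 0) + (if x \in S :\: G then n^-1 else 0).
  rewrite /unif_on inE; case: (boolP (x \in G)) => [xG | _] /=.
    rewrite (fintype.subsetP GS x xG) addr0 distrC ger0_norm // subr_ge0.
    rewrite lef_pV2 ?posrE ?ltr0n //.
    - by rewrite ler_nat subset_leq_card.
    - by apply/card_gt0P; exists x; apply: (fintype.subsetP GS).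
    - by apply/card_gt0P; exists x.
  by case: (x \in S); rewrite ?subr0 ?normr0 ?add0r ?ger0_norm ?invr_ge0.
have partG : a * (a^-1 - n^-1) <= b / n.
  have [->|a0] := eqVneq a 0; first by rewrite mul0r divr_ge0.
  have n0 : n != 0 by rewrite nE paddr_eq0 ?ler0n // negb_and a0.
  by rewrite mulrBr divff // -[1](divff n0) -mulrBl [in X in X - _]nE addrC addKr mulrC.
have sum_pointwise : \sum_x `|unif_on S x - unif_on G x| <= a * (a^-1 - n^-1) + b / n.
  apply: le_trans (ler_sum _ (fun x _ => pointwise x)) _.
  rewrite big_split /= -!big_mkcond /= !sumr_const.
  by rewrite -[_ *+ #|G|]mulr_natl -[_ *+ #|S :\: G|]mulr_natl.
lra.
Qed.
End UniformOn.

Arguments unif_on {R T} S x.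

Lemma le_powR_inf (R : realType) (b c S : R) (Phi : set R) :
  1 < b -> 0 < c -> 0 < S -> (Phi !=set0)%classic ->
  (forall phi, Phi phi -> S <= b `^ (c * phi)) -> S <= b `^ (c * inf Phi).
Proof.
move=> b1 c0 S0 Phi0 leS; have lnb0 : 0 < ln b := ln_gt0 b1.
have SE : S = b `^ (c * (ln S / (c * ln b))).
  rewrite /powR gt_eqF ?(lt_trans ltr01 b1) // -[LHS]lnK ?posrE //; congr expR.
  by field; rewrite !gt_eqF.
rewrite [X in X <= _]SE ler_powR ?(ltW b1) // ler_pM2l //.
apply: lb_le_inf => // phi /leS; rewrite -ler_ln ?posrE ?powR_gt0 ?(lt_trans ltr01 b1) //.
by rewrite ln_powR ler_pdivrMr ?mulr_gt0 // mulrCA mulrA.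
Qed.

Lemma powR_natmul_log3 (R : realType) (a : R) n : 0 < a -> 3 `^ (n%:R * log3 a) = a ^+ n.
Proof.
move=> a0; have log3K : 3 `^ log3 a = a.
  by rewrite /powR pnatr_eq0 /= /log3 mulfVK ?lnK // gt_eqF // ln_gt0 // ltr1n.
by rewrite mulrC powRrM log3K powR_mulrn // ltW.
Qed.

Lemma sum_pow_card_setIC_le (R : realFieldType) m s (A : {set 'I_m}) (c x : R) :
  0 <= c -> 0 < x -> (s <= m)%N -> #|A| = (m - s)%N ->
  \sum_(E in [set E : {set 'I_m} | #|E| == s]) c ^+ #|A :&: ~: E|
    <= ((1 + c * x) / x) ^+ (m - s) * (1 + x) ^+ s.
Proof.
move=> c0 x0 sm cardA.
have cardC (E : {set 'I_m}) : #|~: E| = (m - #|E|)%N.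
  by rewrite cardsCs finset.setCK card_ord.
rewrite expr_div_n mulrAC ler_pdivlMr ?exprn_gt0 // mulr_suml.
apply: le_trans (_ : \sum_(B : {set 'I_m}) c ^+ #|A :&: B| * x ^+ #|B| <= _); last first.
  by rewrite sum_pow_card_setI cardA cardC cardA subKn.
rewrite (eq_bigr (fun E => c ^+ #|A :&: ~: E| * x ^+ #|~: E|)) => [|E]; last first.
  by rewrite inE => /eqP sE; rewrite cardC sE.
rewrite [X in _ <= X](reindex_inj (@finset.setC_inj _)) /= big_mkcond /=.
apply: ler_sum => E _; case: ifP => // _.
by rewrite mulr_ge0 ?exprn_ge0 // ltW.
Qed.

Section FiniteFieldCounting.
Variable F : finFieldType.

Lemma card_cV r : #|{: 'cV[F]_r}| = (#|F| ^ r)%N.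
Proof. by rewrite card_mx muln1. Qed.

(* Every fibre of the surjection [v |-> A *m v] is a translate of its kernel. *)
Lemma card_ker_row_free t r (A : 'M[F]_(t, r)) : row_free A ->
  (#|[set v : 'cV[F]_r | A *m v == 0%R]| * #|F| ^ t = #|F| ^ r)%N.
Proof.
move=> freeA; set K := [set v : 'cV[F]_r | A *m v == 0].
have onto (w : 'cV_t) : exists v, A *m v = w.
  have /mulmxKpV wA : (w^T <= A^T)%MS by rewrite submx_full // /row_full mxrank_tr.
  exists (w^T *m pinvmx A^T)^T.
  by apply: (can_inj (@trmxK _ _ _)); rewrite trmx_mul trmxK.
have card_fibre (w : 'cV_t) : #|[set v | A *m v == w]| = #|K|.
  have [v0 <-] := onto w.
  have -> : [set v | A *m v == A *m v0] = [set u + v0 | u in K].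
    apply/setP => v; rewrite inE; apply/eqP/imsetP => [Av|[u + ->]].
      by exists (v - v0); rewrite ?subrK // inE mulmxBr Av subrr.
    by rewrite inE => /eqP Au; rewrite mulmxDr Au add0r.
  exact: card_imset (addIr v0).
rewrite -[RHS]card_cV -[RHS]sum1_card (partition_big (mulmx A) xpredT) //=.
rewrite (eq_bigr (fun=> #|K|)) => [|w _]; last first.
  by rewrite -(card_fibre w) -sum1_card; apply: eq_bigl => v; rewrite inE.
by rewrite sum_nat_const card_cV mulnC.
Qed.

Lemma card_nonzero_sub_rV r (y : 'rV[F]_r) :
  (#|[set y' : 'rV[F]_r | (y' != 0%R) && (y' <= y)%MS]| <= #|F|.-1)%N.
Proof.
rewrite -card_finField_unit.
apply: leq_trans (leq_imset_card (fun a : {unit F} => val a *: y) _).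
apply/subset_leq_card/fintype.subsetP => y'; rewrite inE => /andP[y'0 /sub_rVP[a ya]].
have a_unit : a \is a GRing.unit.
  by rewrite unitfE; apply: contraNneq y'0 => a0; rewrite ya a0 scale0r.
by apply/imsetP; exists (FinRing.unit F a_unit).
Qed.

Section Annihilation.
Variables r m : nat.

Definition annihilates_cols (y : 'rV[F]_r) (H : 'M[F]_(r, m)) (A : {set 'I_m}) : bool :=
  [forall j in A, y *m col j H == 0].

Lemma annihilates_colsU y H A B :
  annihilates_cols y H (A :|: B) = annihilates_cols y H A && annihilates_cols y H B.
Proof.
apply/forall_inP/andP => [yAB | [/forall_inP yA /forall_inP yB] j].
  by split; apply/forall_inP => j jA; apply: yAB; rewrite inE jA ?orbT.
by rewrite inE => /orP[/yA | /yB].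
Qed.

Lemma annihilates_colsZ a y H A : a != 0 ->
  annihilates_cols (a *: y) H A = annihilates_cols y H A.
Proof.
by move=> a0; apply: eq_forallb => j; rewrite -scalemxAl scaler_eq0 (negPf a0).
Qed.

Lemma natr_annihilates_cols (R : comPzSemiRingType) y H A :
  (annihilates_cols y H A)%:R =
    \prod_j (if j \in A then (y *m col j H == 0)%:R else 1) :> R.
Proof.
rewrite -big_mkcond /=; case: (boolP (annihilates_cols y H A)) => [/forall_inP yA | ].
  by rewrite big1 // => j /yA ->.
rewrite negb_forall_in => /existsP[j /andP[jA /negPf yj]].
by rewrite (bigD1 j) //= yj mul0r.
Qed.

End Annihilation.
End FiniteFieldCounting.

Section ColumnExpectations.
Variables (F : finFieldType) (R : numFieldType) (r m : nat).

Let q : R := #|F|%:R.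
Let N : R := #|{: 'M[F]_(r, m)}|%:R.

Lemma natr_card_neq0 : q != 0.
Proof. by rewrite pnatr_eq0 -lt0n ltnW // card_finNzRing_gt1. Qed.

Lemma natr_card_mx : N = (q ^+ r) ^+ m.
Proof. by rewrite /N card_mx natrX exprM. Qed.

Lemma sum_cV_orth_ker t (Y : 'M[F]_(t, r)) : row_free Y ->
  \sum_(v : 'cV[F]_r) ((Y *m v == 0)%:R : R) = q ^+ r / q ^+ t.
Proof.
move=> freeY; rewrite sum_natr_pred; apply: (canRL (mulfK (expf_neq0 _ natr_card_neq0))).
by rewrite -!natrX -natrM card_ker_row_free.
Qed.

Lemma sum_cV_orth (y : 'rV[F]_r) : y != 0 ->
  \sum_(v : 'cV[F]_r) ((y *m v == 0)%:R : R) = q ^+ r / q.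
Proof. by move=> y0; rewrite sum_cV_orth_ker ?expr1 // /row_free rank_rV y0. Qed.

Lemma row_free_col_mx_rV (y y' : 'rV[F]_r) : y != 0 -> ~~ (y' <= y)%MS ->
  row_free (col_mx y y').
Proof.
move=> y0 y'y; rewrite /row_free eqn_leq rank_leq_row /= -addsmxE.
have : (y < y + y')%MS.
  by rewrite ltmxE addsmxSl /=; apply: contra y'y; apply: submx_trans (addsmxSr _ _).
by rewrite ltmxErank => /andP[_]; rewrite rank_rV y0.
Qed.

Lemma sum_cV_orth2 (y y' : 'rV[F]_r) : y != 0 -> ~~ (y' <= y)%MS ->
  \sum_(v : 'cV[F]_r) ((y *m v == 0)%:R * (y' *m v == 0)%:R : R) = q ^+ r / q ^+ 2.
Proof.
move=> y0 y'y; rewrite -(sum_cV_orth_ker (row_free_col_mx_rV y0 y'y)).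
by apply: eq_bigr => v _; rewrite mul_col_mx col_mx_eq0 -natrM mulnb.
Qed.

Lemma sum_annihilates_cols (y : 'rV[F]_r) A : y != 0 ->
  \sum_(H : 'M[F]_(r, m)) ((annihilates_cols y H A)%:R : R) = N * (q^-1) ^+ #|A|.
Proof.
move=> y0; under eq_bigr do rewrite natr_annihilates_cols.
rewrite (sum_mx_prod_col (fun j v => if j \in A then (y *m v == 0)%:R else 1)).
rewrite (eq_bigr (fun j => q ^+ r * (if j \in A then q^-1 else 1))).
  by rewrite big_split /= prodr_const card_ord prodr_if_const natr_card_mx.
move=> j _; case: (j \in A); first by rewrite sum_cV_orth.
by rewrite sumr_const card_cV natrX mulr1.
Qed.

Lemma sum_annihilates_cols2_free (y y' : 'rV[F]_r) A B : y != 0 -> ~~ (y' <= y)%MS ->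
  \sum_(H : 'M[F]_(r, m)) ((annihilates_cols y H A)%:R * (annihilates_cols y' H B)%:R : R)
    = N * (q^-1) ^+ #|A| * (q^-1) ^+ #|B|.
Proof.
move=> y0 y'y; have y'0 : y' != 0 by apply: contraNneq y'y => ->; rewrite sub0mx.
under eq_bigr do rewrite !natr_annihilates_cols -big_split /=.
rewrite (sum_mx_prod_col (fun j v => (if j \in A then (y *m v == 0)%:R else 1)
                                      * (if j \in B then (y' *m v == 0)%:R else 1))).
rewrite (eq_bigr (fun j => q ^+ r * (if j \in A then q^-1 else 1)
                                  * (if j \in B then q^-1 else 1))).
  by rewrite !big_split /= prodr_const card_ord !prodr_if_const natr_card_mx.
move=> j _; case: (j \in A); case: (j \in B); rewrite ?mulr1.
- by rewrite sum_cV_orth2 // expr2 invfM mulrA.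
- by under eq_bigr do rewrite mulr1; rewrite sum_cV_orth.
- by under eq_bigr do rewrite mul1r; rewrite sum_cV_orth.
- by rewrite sumr_const card_cV natrX.
Qed.

Lemma sum_annihilates_cols2_sub (y y' : 'rV[F]_r) A B : y' != 0 -> (y' <= y)%MS ->
  \sum_(H : 'M[F]_(r, m)) ((annihilates_cols y H A)%:R * (annihilates_cols y' H B)%:R : R)
    = N * (q^-1) ^+ #|A :|: B|.
Proof.
move=> y'0 /sub_rVP[a y'E].
have a0 : a != 0 by apply: contraNneq y'0 => a0; rewrite y'E a0 scale0r.
have y0 : y != 0 by apply: contraNneq y'0 => y0; rewrite y'E y0 scaler0.
rewrite -(sum_annihilates_cols _ y0); apply: eq_bigr => H _.
by rewrite y'E annihilates_colsZ // -natrM mulnb annihilates_colsU.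
Qed.

End ColumnExpectations.

Section TernaryParityChecks.
Variables r m : nat.

Lemma annihilates_compl_cols (y : 'rV['F_3]_r) (H : 'M['F_3]_(r, m)) E :
  annihilates_cols y H (~: E) = (y *m compl_cols H E == 0).
Proof.
have entryE j : (y *m col j H == 0) = ((y *m H) 0 j == 0).
  have -> : (y *m H) 0 j = (y *m col j H) 0 0.
    by rewrite !mxE; apply: eq_bigr => i _; rewrite !mxE.
  by apply/eqP/eqP => [-> | y0]; [rewrite mxE | apply/rowP => b; rewrite (ord1 b) y0 mxE].
rewrite /compl_cols mulmx_colsub; apply/forall_inP/eqP => [yE | yE j jE].
  by apply/rowP => i; rewrite [LHS]mxE [RHS]mxE; apply/eqP; rewrite -entryE yE ?enum_valP.
rewrite entryE; move/rowP/(_ (enum_rank_in jE j)): yE.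
by rewrite [LHS]mxE [RHS]mxE /= enum_rankK_in // => ->.
Qed.

Lemma oppr_neq_F3 (y : 'rV['F_3]_r) : y != 0 -> - y != y.
Proof.
move=> y0; apply: contra_neq y0 => /eqP.
by rewrite -subr_eq0 -opprD oppr_eq0 -mulr2n -scaler_nat scaler_eq0 => /orP[] // /eqP.
Qed.

Lemma two_le_sum_annihilators (R : numDomainType) (H : 'M['F_3]_(r, m)) E :
  ~~ good H E ->
  2 <= \sum_(y in [set y : 'rV['F_3]_r | y != 0]) ((annihilates_cols y H (~: E))%:R : R).
Proof.
move=> bad.
have [y y0 yE] : exists2 y : 'rV_r, y != 0 & y *m compl_cols H E = 0.
  have kerE : kermx (compl_cols H E) != 0.
    by rewrite -mxrank_eq0 mxrank_ker subn_eq0 -ltnNge ltn_neqAle rank_leq_row andbT.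
  exists (nz_row (kermx (compl_cols H E))); first by rewrite nz_row_eq0.
  by apply/sub_kermxP; exact: nz_row_sub.
have ann z : z *m compl_cols H E = 0 -> annihilates_cols z H (~: E).
  by move=> zE; rewrite annihilates_compl_cols zE.
rewrite (bigD1 y) ?inE //= (bigD1 (- y)) ?inE ?oppr_eq0 ?oppr_neq_F3 ?y0 //=.
rewrite (ann y yE) (ann (- y)) ?mulNmx ?yE ?oppr0 //.
by rewrite addrA lerDl sumr_ge0.
Qed.

End TernaryParityChecks.

Section TernarySampling.
Variables (R : realType) (m k d : nat).
Hypotheses (km : (k <= m)%N) (d_gt0 : (0 < d)%N) (dk : (d <= k)%N).

Let r := (m - k)%N.
Let s := (k - d)%N.
Let nsub := 'C(m, s).
Let Ss := [set E : {set 'I_m} | #|E| == s].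
Let Sgood (H : 'M['F_3]_(r, m)) := [set E : {set 'I_m} | (#|E| == s) && good H E].
Let Y := [set y : 'rV['F_3]_r | y != 0].
Let pairs := finset.setX Ss Y.
Let N : R := #|{: 'M['F_3]_(r, m)}|%:R.
Let p : R := 3^-1 ^+ (r + d).
Let X (i : {set 'I_m} * 'rV['F_3]_r) (H : 'M['F_3]_(r, m)) : R :=
  (annihilates_cols i.2 H (~: i.1))%:R.
Let Z (H : 'M['F_3]_(r, m)) : R := \sum_(i in pairs) X i H.
Let mu : R := #|pairs|%:R * p.
Let Phi : set R := [set y : R | exists2 x : R, 0 < x &
  y = (1 - k%:R / m%:R + d%:R / m%:R) * log3 ((1 + 3 * x) / x) +
      (k%:R / m%:R - d%:R / m%:R) * log3 (1 + x)]%classic.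
Let P : R := 3 `^ (m%:R * inf Phi).

Lemma card_F3 : #|'F_3| = 3%N.
Proof. by rewrite card_Fp. Qed.

Lemma card_setC_sample E : E \in Ss -> #|~: E| = (r + d)%N.
Proof. by rewrite inE => /eqP sE; have := cardsC E; rewrite card_ord sE /r /s; lia. Qed.

Lemma sum_X i : i \in pairs -> \sum_H X i H = N * p.
Proof.
case: i => E y; rewrite finset.in_setX !inE => /andP[SE y0].
by rewrite sum_annihilates_cols // card_F3 card_setC_sample ?inE.
Qed.

Lemma cov_X_le i j : i \in pairs -> j \in pairs ->
  \sum_H (X i H - p) * (X j H - p) <=
    if (j.2 <= i.2)%MS then N * 3^-1 ^+ #|~: i.1 :|: ~: j.1| else 0.
Proof.
move=> iP jP; rewrite sum_centered_mul ?sum_X //.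
case: i j iP jP => [E y] [E' y']; rewrite !finset.in_setX !inE /=.
move=> /andP[SE y0] /andP[SE' y'0]; rewrite /X /=; case: ifP => [y'y | /negbT y'y].
  by rewrite sum_annihilates_cols2_sub // card_F3 lerBlDr lerDl mulr_ge0 ?sqr_ge0.
rewrite sum_annihilates_cols2_free // card_F3 !card_setC_sample ?inE //.
by rewrite -mulrA -expr2 subrr.
Qed.

Lemma sum_if_sub_rV_le (y : 'rV['F_3]_r) (c : R) : 0 <= c ->
  \sum_(y' in Y) (if (y' <= y)%MS then c else 0) <= 2 * c.
Proof.
move=> c0; rewrite -big_mkcondr.
rewrite (eq_bigl (mem [set y' : 'rV_r | (y' != 0) && (y' <= y)%MS])) => [|y']; last first.
  by rewrite !inE.
rewrite sumr_const -[c *+ _]mulr_natl; apply: ler_wpM2r => //; rewrite ler_nat.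
by have := card_nonzero_sub_rV y; rewrite card_F3.
Qed.

Lemma sum_pow_card_setIC_le_P E : E \in Ss ->
  \sum_(E' in Ss) (3 : R) ^+ #|~: E :&: ~: E'| <= P.
Proof.
move=> SE; have m_gt0 : (0 < m)%N by lia.
have coef1 : m%:R * (1 - k%:R / m%:R + d%:R / m%:R) = (m - s)%N%:R :> R.
  by rewrite /s subnBA // natrB ?natrD; [field; rewrite pnatr_eq0 -lt0n | lia].
have coef2 : m%:R * (k%:R / m%:R - d%:R / m%:R) = s%:R :> R.
  by rewrite /s natrB //; field; rewrite pnatr_eq0 -lt0n.
apply: le_powR_inf; rewrite ?ltr1n ?ltr0n //.
- rewrite (bigD1 E) //=; apply: ltr_pwDl; first exact: exprn_gt0.
  by apply: sumr_ge0 => *; apply: exprn_ge0.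
- by eexists; exists 1.
move=> _ [x x0 ->]; set u := (1 + 3 * x) / x; set v := 1 + x.
have -> : m%:R * ((1 - k%:R / m%:R + d%:R / m%:R) * log3 u +
                  (k%:R / m%:R - d%:R / m%:R) * log3 v)
    = (m - s)%N%:R * log3 u + s%:R * log3 v by rewrite -coef1 -coef2; ring.
have u0 : 0 < u by rewrite divr_gt0 // addr_gt0 // mulr_gt0.
rewrite powRD ?pnatr_eq0 ?implybT // !powR_natmul_log3 ?addr_gt0 //.
apply: sum_pow_card_setIC_le => //; first by rewrite /s; lia.
by rewrite card_setC_sample // /s; lia.
Qed.

Lemma sum_overlap_le E : E \in Ss ->
  \sum_(E' in Ss) (3^-1 : R) ^+ #|~: E :|: ~: E'| <= 3^-1 ^+ (2 * (r + d)) * P.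
Proof.
move=> SE.
have unionE E' : E' \in Ss ->
    (3^-1 : R) ^+ #|~: E :|: ~: E'| = 3^-1 ^+ (2 * (r + d)) * 3 ^+ #|~: E :&: ~: E'|.
  move=> SE'; have := cardsUI (~: E) (~: E'); rewrite !card_setC_sample // => cardUI.
  by rewrite mul2n -addnn -cardUI exprD -mulrA [in X in _ * X]exprVn mulVf ?mulr1.
rewrite (eq_bigr _ unionE) -mulr_sumr; apply: ler_wpM2l; first by rewrite exprn_ge0.
exact: sum_pow_card_setIC_le_P.
Qed.

Lemma sum_cov_le i : i \in pairs ->
  \sum_(j in pairs) \sum_H (X i H - p) * (X j H - p)
    <= 2 * (N * (3^-1 ^+ (2 * (r + d)) * P)).
Proof.
move=> iP; apply: le_trans (ler_sum _ (fun j jP => cov_X_le iP jP)) _.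
rewrite (sum_setX _ _ (fun j =>
  if (j.2 <= i.2)%MS then N * 3^-1 ^+ #|~: i.1 :|: ~: j.1| else 0)) /=.
apply: le_trans (ler_sum _ (fun E' _ => sum_if_sub_rV_le i.2 _)) _.
  by move=> E' _; rewrite mulr_ge0 ?exprn_ge0 ?invr_ge0.
rewrite -mulr_sumr -mulr_sumr; apply: ler_wpM2l => //.
apply: ler_wpM2l; first exact: ler0n.
by case: i iP => [E y]; rewrite finset.in_setX => /andP[/sum_overlap_le].
Qed.

Lemma card_pairs_le : (#|pairs| <= nsub * 3 ^ r)%N.
Proof.
rewrite cardsX card_draws card_ord leq_mul //.
by apply: leq_trans (max_card _) _; rewrite card_mx card_F3 mul1n.
Qed.

Lemma second_moment_le :
  \sum_H (Z H - mu) ^+ 2 <= (nsub * 3 ^ r)%:R * (2 * (N * (3^-1 ^+ (2 * (r + d)) * P))).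
Proof.
have ZE H : Z H - mu = \sum_(i in pairs) (X i H - p).
  by rewrite sumrB sumr_const -[p *+ _]mulr_natl.
under eq_bigr do rewrite ZE; rewrite sum_sqr_sum.
apply: le_trans (ler_sum _ (fun i iP => sum_cov_le iP)) _.
rewrite sumr_const -[_ *+ #|pairs|]mulr_natl.
apply: ler_wpM2r; last by rewrite ler_nat card_pairs_le.
by rewrite !mulr_ge0 ?ler0n ?exprn_ge0 ?invr_ge0 ?powR_ge0.
Qed.

Lemma mean_le : mu <= nsub%:R * 3^-1 ^+ d.
Proof.
have -> : nsub%:R * 3^-1 ^+ d = (nsub * 3 ^ r)%:R * p :> R.
  by rewrite /p natrM natrX exprD !exprVn; field; rewrite !expf_neq0.
by apply: ler_wpM2r; rewrite ?exprn_ge0 ?invr_ge0 ?ler_nat ?card_pairs_le.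
Qed.

Lemma two_card_bad_le H : 2 * #|Ss :\: Sgood H|%:R <= Z H.
Proof.
rewrite /Z sum_setX (big_setID (Sgood H)) /= -[X in X <= _]add0r.
apply: lerD; first by apply: sumr_ge0 => E _; apply: sumr_ge0 => y _; exact: ler0n.
rewrite mulr_natr -sumr_const; apply: ler_sum => E.
rewrite !inE negb_and => /andP[/orP[/negPf-> // | bad] _].
exact: two_le_sum_annihilators.
Qed.

Lemma sdist_le_card_bad H :
  sdist (@unif_dist R m s) (good_dist R s H) <= #|Ss :\: Sgood H|%:R / nsub%:R.
Proof.
have unifE E : @unif_dist R m s E = unif_on Ss E.
  by rewrite /unif_dist /unif_on inE card_draws card_ord.
have goodE E : good_dist R s H E = unif_on (Sgood H) E by rewrite /good_dist /unif_on inE.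
have -> : nsub = #|Ss| by rewrite card_draws card_ord.
rewrite /sdist; under eq_bigr do rewrite unifE goodE.
by apply: sdist_unif_on_sub; apply/fintype.subsetP => E; rewrite !inE => /andP[].
Qed.

Lemma sdist_gt_deviation H :
  ((3 : R) ^+ d)^-1 < sdist (@unif_dist R m s) (good_dist R s H) ->
  nsub%:R * 3^-1 ^+ d <= Z H - mu.
Proof.
have nsub_gt0 : (0 : R) < nsub%:R by rewrite ltr0n bin_gt0 /s; lia.
move=> /lt_le_trans /(_ (sdist_le_card_bad H)); rewrite ltr_pdivlMr // => many_bad.
have := two_card_bad_le H; have := mean_le; rewrite exprVn.
lra.
Qed.

Theorem prob_sdist_gt_le :
  probH R (fun H : 'M['F_3]_(r, m) =>
    sdist (@unif_dist R m s) (good_dist R s H) > ((3 : R) ^+ d)^-1)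
  <= 2 / nsub%:R * (P / 3 ^+ r).
Proof.
have c_gt0 : 0 < nsub%:R * 3^-1 ^+ d :> R.
  by rewrite mulr_gt0 ?exprn_gt0 ?invr_gt0 // ltr0n bin_gt0 /s; lia.
have := card_le_sum_sqr (ltW c_gt0) sdist_gt_deviation.
move/le_trans/(_ second_moment_le) => ev_le.
rewrite /probH -/N ler_pdivrMr ?ltr0n; last by apply/card_gt0P; exists 0.
suff -> : 2 / nsub%:R * (P / 3 ^+ r) * N =
    (nsub * 3 ^ r)%:R * (2 * (N * (3^-1 ^+ (2 * (r + d)) * P))) / (nsub%:R * 3^-1 ^+ d) ^+ 2.
  by rewrite ler_pdivlMr ?exprn_gt0.
rewrite natrM natrX mul2n -addnn !exprD !exprVn.
by field; rewrite ?expf_neq0 ?pnatr_eq0 -?lt0n ?bin_gt0 /s; lia.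
Qed.

Lemma powR_gamma_exp :
  3 `^ (2 * d%:R + gamma_exp (k%:R / m%:R) (d%:R / m%:R) * m%:R)
    = 3 ^+ (2 * d) * (P / 3 ^+ r) :> R.
Proof.
have m0 : m%:R != 0 :> R by rewrite pnatr_eq0 -lt0n; lia.
have -> : 2 * d%:R + gamma_exp (k%:R / m%:R) (d%:R / m%:R) * m%:R =
    m%:R * inf Phi + ((2 * d)%N%:R - r%:R) :> R.
  by rewrite /gamma_exp -/Phi /r natrB // natrM; field.
rewrite powRD ?powRB ?pnatr_eq0 ?implybT // !powR_mulrn ?ler0n //.
by rewrite mulrCA.
Qed.

End TernarySampling.

Theorem lemma7 (R : realType) (n k d : nat) :
  ~~ odd n -> (k <= n./2)%N -> (1 <= d)%N -> (d <= k)%N ->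
  @probH R _ _ (fun H : 'M['F_3]_(n./2 - k, n./2) =>
           sdist (@unif_dist R n./2 (k - d)) (good_dist R (k - d) H)
             > ((3 : R) ^+ d)^-1)
  <= 2 / ('C(n./2, k - d))%:R *
     ((3 : R) ^+ d + 2 * (3 : R) `^ (2 * d%:R +
        gamma_exp (k%:R / (n./2)%:R) (d%:R / (n./2)%:R) * (n./2)%:R)).
Proof.
move=> _ km d_gt0 dk.
apply: le_trans (prob_sdist_gt_le R km d_gt0 dk) _.
rewrite powR_gamma_exp //; apply: ler_wpM2l; first by rewrite divr_ge0.
set w := 3 `^ _ / _; have w_ge0 : 0 <= w by rewrite divr_ge0 ?powR_ge0 ?exprn_ge0.
have : 1 <= (3 : R) ^+ (2 * d) by rewrite exprn_ege1 // ler1n.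
have := exprn_ge0 d (ler0n R 3).
nra.
Qed.
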